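(* Let $T\in RB(n)$ have strictly positive edge lengths satisfying (MC), and let $l_{\max}=\max_e l(e)$. Let $i$ be a leaf, and let $e_h,\dots,e_0$ be the edges of the path from the root to $i$, where $e_0$ is the pendant edge at $i$ and $e_h$ is incident with the root. Write $l_j=l(e_j)$, and let $n_j$ be the number of leaves descended from the endpoint of $e_j$ farther from the root. Then for every $1\le j\le h$, $$n_j \;\geq\; 2^{\lceil \sum_{k=0}^{j-1} l_k / l_{\max}\rceil}.$$
   Context: $RB(n)$ is the set of rooted binary phylogenetic trees on leaf set $[n]=\{1,\dots,n\}$: rooted trees in which every non-leaf vertex has out-degree exactly 2 and the leaves are labelled bijectively by $[n]$. (MC) is the condition that the sum of edge lengths from the root to each leaf is the same for all leaves. *)

From HB Require Import structures.
From mathcomp Require Import all_boot all_order all_algebra.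
Set Implicit Arguments. Unset Strict Implicit. Unset Printing Implicit Defensive.
Import Order.TTheory GRing.Theory Num.Theory.
Local Open Scope ring_scope.

(* A rooted binary tree with leaf labels in nat; each internal vertex has
   exactly two children, and each child edge carries a length. The root is
   the top node (it has no incoming edge). *)
Inductive ptree (R : Type) : Type :=
| PLeaf (lab : nat)
| PNode (l1 : R) (t1 : ptree R) (l2 : R) (t2 : ptree R).
Arguments PLeaf {R}.

Fixpoint leaves (R : Type) (t : ptree R) : seq nat :=
  match t with
  | PLeaf k => [:: k]
  | PNode _ t1 _ t2 => leaves t1 ++ leaves t2
  end.

Fixpoint edge_lengths (R : Type) (t : ptree R) : seq R :=
  match t with
  | PLeaf _ => [::]
  | PNode l1 t1 l2 t2 => l1 :: l2 :: edge_lengths t1 ++ edge_lengths t2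
  end.

Definition is_RB (R : Type) (n : nat) (t : ptree R) : Prop :=
  perm_eq (leaves t) (iota 1 n).

Definition pos_lengths (R : numDomainType) (t : ptree R) : Prop :=
  forall l, l \in edge_lengths t -> 0 < l.

Fixpoint depths (R : numDomainType) (t : ptree R) : seq R :=
  match t with
  | PLeaf _ => [:: 0]
  | PNode l1 t1 l2 t2 => map (fun d => l1 + d) (depths t1) ++ map (fun d => l2 + d) (depths t2)
  end.

Definition MC (R : numDomainType) (t : ptree R) : Prop :=
  forall x y, x \in depths t -> y \in depths t -> x = y.

Definition lmax (R : realDomainType) (t : ptree R) : R :=
  foldr Num.max 0 (edge_lengths t).

(* path from the root to leaf i: the list of edges (length, subtree below the
   edge) ordered from the root edge e_h down to the pendant edge e_0. *)
Fixpoint rpath (R : Type) (t : ptree R) (i : nat) : option (seq (R * ptree R)) :=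
  match t with
  | PLeaf k => if k == i then Some [::] else None
  | PNode l1 t1 l2 t2 =>
      match rpath t1 i with
      | Some p => Some ((l1, t1) :: p)
      | None =>
          match rpath t2 i with
          | Some p => Some ((l2, t2) :: p)
          | None => None
          end
      end
  end.

From HB Require Import structures.
From mathcomp Require Import all_boot all_order all_algebra.
Import Order.TTheory GRing.Theory Num.Theory.
Local Open Scope ring_scope.

(* A tree all of whose root-to-leaf distances equal H and all of
   whose edges have length at most L > 0 has at least 2^ceil(H/L) leaves: at
   the root both child subtrees again have uniform depth, namely H - l with
   l <= L, so each has at least 2^(ceil(H/L) - 1) leaves by induction
   ([uniform_depth_leaves]).  The theorem is this bound applied to the
   subtree hanging below e_j, taking L = lmax t:
   - every subtree met along the path to leaf i inherits (MC) and has edge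
     lengths among those of t ([rpath_suffix]);
   - the lengths of e_{j-1}, ..., e_0 add up to a root-to-leaf distance of
     that subtree ([rpath_sum_depth]);
   - the degenerate case lmax t = 0 is trivial since trees have leaves. *)

Lemma leaves_gt0 {R : Type} (t : ptree R) : (0 < size (leaves t))%N.
Proof. by elim: t => //= l1 t1 IH1 l2 t2 _; rewrite size_cat addn_gt0 IH1. Qed.

Lemma lmax_ge0 {R : realDomainType} (t : ptree R) : 0 <= lmax t.
Proof.
by rewrite /lmax; elim: (edge_lengths t) => //= a s IH; rewrite le_max IH orbT.
Qed.

Lemma lmax_ub {R : realDomainType} (t : ptree R) l :
  l \in edge_lengths t -> l <= lmax t.
Proof.
rewrite /lmax; elim: (edge_lengths t) => //= a s IH.
by rewrite inE le_max => /orP [/eqP -> | /IH ->]; rewrite ?lexx ?orbT.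
Qed.

Lemma depths_left {R : numDomainType} (l1 : R) t1 l2 t2 d :
  d \in depths t1 -> l1 + d \in depths (PNode l1 t1 l2 t2).
Proof. by move=> hd; rewrite mem_cat map_f. Qed.

Lemma depths_right {R : numDomainType} (l1 : R) t1 l2 t2 d :
  d \in depths t2 -> l2 + d \in depths (PNode l1 t1 l2 t2).
Proof. by move=> hd; rewrite mem_cat map_f ?orbT. Qed.

Lemma edges_left {R : eqType} (l1 : R) t1 l2 t2 :
  {subset edge_lengths t1 <= edge_lengths (PNode l1 t1 l2 t2)}.
Proof. by move=> l hl; rewrite !inE mem_cat hl !orbT. Qed.

Lemma edges_right {R : eqType} (l1 : R) t1 l2 t2 :
  {subset edge_lengths t2 <= edge_lengths (PNode l1 t1 l2 t2)}.
Proof. by move=> l hl; rewrite !inE mem_cat hl !orbT. Qed.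

(* Descending along an edge of length l <= L lowers ceil(H/L) by at most one;
   this is what makes the count of leaves at least double at each level. *)
Lemma ceil_sub_edge {R : archiRealFieldType} (L l H : R) :
  0 < L -> l <= L -> Num.ceil (H / L) - 1 <= Num.ceil ((H - l) / L).
Proof.
move=> L0 lL.
have -> : Num.ceil (H / L) - 1 = Num.ceil (H / L - 1).
  by rewrite ceilDrz ?rpredN ?rpred1 // -(@intrKceil R (-1)) intrN.
by apply: le_ceil; rewrite mulrBl lerD2l lerN2 ler_pdivrMr // mul1r.
Qed.

Lemma uniform_depth_leaves {R : archiRealFieldType} (L : R) (t : ptree R) :
  0 < L -> forall H : R,
  (forall l, l \in edge_lengths t -> l <= L) ->
  (forall d, d \in depths t -> d = H) ->
  (2 : R) ^ Num.ceil (H / L) <= (size (leaves t))%:R.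
Proof.
move=> L0; elim: t => [lab | l1 t1 IH1 l2 t2 IH2] H hE hD /=.
  by rewrite -(hD 0) ?mem_head // mul0r ceil0 expr0z.
set c := Num.ceil (H / L).
have child (l : R) (s : ptree R) :
    l <= L -> (forall d, d \in depths s -> l + d = H) ->
    (forall H', (forall d, d \in depths s -> d = H') ->
       (2 : R) ^ Num.ceil (H' / L) <= (size (leaves s))%:R) ->
    (2 : R) ^ (c - 1) <= (size (leaves s))%:R.
  move=> lL hDs IH; apply: le_trans (IH (H - l) _); last first.
    by move=> d /hDs <-; rewrite addrC addKr.
  by apply: ler_weXz2l; [rewrite ler1n | exact: ceil_sub_edge].
have hE1 l : l \in edge_lengths t1 -> l <= L by move/edges_left/hE.
have hE2 l : l \in edge_lengths t2 -> l <= L by move/edges_right/hE.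
have hl1 : l1 <= L by apply: hE; rewrite mem_head.
have hl2 : l2 <= L by apply: hE; rewrite !inE eqxx orbT.
have le1 := child l1 t1 hl1
  (fun d hd => hD _ (depths_left _ _ _ _ _ hd)) (fun H' => IH1 H' hE1).
have le2 := child l2 t2 hl2
  (fun d hd => hD _ (depths_right _ _ _ _ _ hd)) (fun H' => IH2 H' hE2).
have -> : c = (c - 1) + 1 by rewrite subrK.
rewrite expfzDr ?pnatr_eq0 // expr1z mulrDr mulr1 size_cat natrD.
exact: lerD.
Qed.

Lemma rpath_sum_depth {R : numDomainType} (t : ptree R) i p :
  rpath t i = Some p -> \sum_(e <- p) e.1 \in depths t.
Proof.
elim: t p => [lab | l1 t1 IH1 l2 t2 IH2] p /=.
  by case: eqP => // _ [<-]; rewrite big_nil mem_head.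
case E1: (rpath t1 i) => [p1 |].
  by move=> [<-]; rewrite big_cons depths_left // IH1.
case E2: (rpath t2 i) => [p2 |] // [<-].
by rewrite big_cons depths_right // IH2.
Qed.

Lemma rpath_cons {R : numDomainType} (t : ptree R) i l s b :
  rpath t i = Some ((l, s) :: b) ->
  [/\ rpath s i = Some b, {subset edge_lengths s <= edge_lengths t}
    & forall d, d \in depths s -> l + d \in depths t].
Proof.
case: t => [lab | l1 t1 l2 t2] /=; first by case: eqP.
case E1: (rpath t1 i) => [p1 |].
  by move=> [<- <- <-]; split=> //; [apply: edges_left | apply: depths_left].
case E2: (rpath t2 i) => [p2 |] // [<- <- <-].
by split=> //; [apply: edges_right | apply: depths_right].
Qed.

Lemma rpath_suffix {R : numDomainType} (t : ptree R) i a l s b :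
  rpath t i = Some (a ++ (l, s) :: b) ->
  [/\ rpath s i = Some b, {subset edge_lengths s <= edge_lengths t}
    & MC t -> MC s].
Proof.
elim: a t => [| [l' s'] a IH] t /= /rpath_cons [hs hsub hD].
  by split=> // hMC x y hx hy; apply: (addrI l); apply: hMC; apply: hD.
have [hb hsub' hMC'] := IH _ hs.
split=> // [x /hsub' /hsub // | hMC]; apply: hMC'.
by move=> x y hx hy; apply: (addrI l'); apply: hMC; apply: hD.
Qed.

(* Reversing a sequence, split around its j-th element: this exhibits the
   j-th edge from the bottom of a path together with the edges below it. *)
Lemma rev_split {T : Type} (x0 : T) {q : seq T} {j} : (j < size q)%N ->
  rev q = rev (drop j.+1 q) ++ nth x0 q j :: rev (take j q).
Proof.
move=> hj; rewrite -{1}(cat_take_drop j q) (drop_nth x0) //.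
by rewrite rev_cat rev_cons cat_rcons.
Qed.

Lemma sum_nth_take {R : nmodType} {T : Type} (x0 : T) (F : T -> R) {q : seq T} {j} :
  (j <= size q)%N ->
  \sum_(0 <= k < j) F (nth x0 q k) = \sum_(x <- take j q) F x.
Proof.
move=> hj; rewrite (big_nth x0) size_take_min (minn_idPl hj).
by apply: eq_big_nat => k /andP [_ hk]; rewrite nth_take.
Qed.

Theorem mainTheorem4 (R : archiRealFieldType) (n : nat) (t : ptree R) (i : nat)
    (p : seq (R * ptree R)) :
  is_RB n t -> pos_lengths t -> MC t ->
  rpath t i = Some p ->
  forall j : nat, (1 <= j < size p)%N ->
    (2 : R) ^ Num.ceil ((\sum_(0 <= k < j) (nth (0, PLeaf 0%N) (rev p) k).1) / lmax t)
      <= (size (leaves (nth (0, PLeaf 0%N) (rev p) j).2))%:R.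
Proof.
move=> _ _ hMC hpath j /andP [_ hj].
set q := rev p; have hjq : (j < size q)%N by rewrite size_rev.
(* e_j = (l, s), and the path continues below it with e_{j-1}, ..., e_0 *)
case E: (nth (0, PLeaf 0%N) q j) => [l s] /=.
have hp : p = rev q by rewrite revK.
move: hpath; rewrite hp (rev_split (0, PLeaf 0%N) hjq) E.
case/rpath_suffix => hs hsub /(_ hMC) hMCs.
(* l_0 + ... + l_{j-1} is the common root-to-leaf distance of s *)
have hdepth := rpath_sum_depth _ _ _ hs; rewrite big_rev in hdepth.
rewrite (sum_nth_take (0, PLeaf 0%N) (fun e => e.1) (ltnW hjq)).
have [-> | lmax_gt0] := eqVneq (lmax t) 0.
  by rewrite invr0 mulr0 ceil0 expr0z ler1n leaves_gt0.
apply: uniform_depth_leaves; first by rewrite lt0r lmax_gt0 lmax_ge0.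
  by move=> l' /hsub /lmax_ub.
by move=> d hd; exact: hMCs hd hdepth.
Qed.
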